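(* Let $p\ge3$ be a prime, let $U$ be the probability distribution on $\mathbb{F}_p$ that assigns probability $1/2$ to each of $0$ and $1$, and let $D$ be a probability distribution on $\mathbb{F}_p$ such that $|D(x)-p^{-1}|\le p^{-2}$ for each $x\in\mathbb{F}_p$. Then there exists a probability distribution $E$ on $\mathbb{F}_p$ such that $D=U+E$.
   Context: For probability distributions $D',D''$ on a finite abelian group $G$, $D'+D''$ denotes their convolution: $(D'+D'')(x)=\sum_{y+z=x}D'(y)D''(z)$, i.e. the distribution of the sum of independent random variables with distributions $D'$ and $D''$. *)

From mathcomp Require Import all_boot all_order all_algebra.
Set Implicit Arguments. Unset Strict Implicit. Unset Printing Implicit Defensive.
Import Order.TTheory GRing.Theory Num.Theory.
Local Open Scope ring_scope.

Definition is_distr (R : realFieldType) (G : finZmodType) (D : {ffun G -> R}) : Prop :=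
  (forall x, 0 <= D x) /\ \sum_(x : G) D x = 1.

(* Convolution: (D1 + D2)(x) = sum_{y+z=x} D1 y D2 z. *)
Definition conv (R : realFieldType) (G : finZmodType) (D1 D2 : {ffun G -> R})
  : {ffun G -> R} :=
  [ffun x => \sum_(y : G) \sum_(z : G | y + z == x) D1 y * D2 z].

Definition Uhalf (R : realFieldType) (p : nat) : {ffun 'F_p -> R} :=
  [ffun x => if (x == 0) || (x == 1) then 2^-1 else 0].

From mathcomp Require Import all_boot all_order all_algebra.
Import Order.TTheory GRing.Theory Num.Theory.
Local Open Scope ring_scope.

(* Take E x = sum_(k < p) (-1)^k D (x - k).  Since p is odd and p = 0 in F_p,
   the alternating sums at x and x - 1 telescope to E x + E (x - 1) = 2 D x,
   which says D = U + E.  The mass of E is sum_(k < p) (-1)^k = 1, and writing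
   D = 1/p + (D - 1/p) gives E x >= 1/p - p * p^-2 = 0. *)

Lemma sumr_sign_ord (R : pzRingType) (n : nat) :
  \sum_(k < n) (-1) ^+ k = (odd n)%:R :> R.
Proof.
elim: n => [|n IHn]; first by rewrite big_ord0.
rewrite big_ord_recr /= IHn -signr_odd.
by case: (odd n); rewrite /= ?expr1 ?expr0 ?subrr ?add0r.
Qed.

Lemma sumr_subr {R : nmodType} {G : finZmodType} (f : G -> R) (c : G) :
  \sum_(x : G) f (x - c) = \sum_(x : G) f x.
Proof. by rewrite [RHS](reindex_inj (addIr (- c))). Qed.

Definition alt_sum {R G : pzRingType} (n : nat) (f : G -> R) (x : G) : R :=
  \sum_(k < n) (-1) ^+ k * f (x - k%:R).

Lemma alt_sumD_subr1 {R G : pzRingType} (n : nat) (f : G -> R) (x : G) :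
  odd n -> n%:R = 0 :> G -> alt_sum n f x + alt_sum n f (x - 1) = f x *+ 2.
Proof.
case: n => // n n_odd n_eq0.
have sign_n : (-1) ^+ n = 1 :> R by rewrite -signr_odd; move: n_odd => /= /negPf ->.
have last_term : x - 1 - n%:R = x by rewrite -addrA -opprD [1 + _]addrC natr1 n_eq0 subr0.
rewrite /alt_sum big_ord_recl big_ord_recr /= sign_n last_term subr0 !mul1r.
have cancel_terms : \sum_(k < n) ((-1) ^+ (bump 0 k) * f (x - (bump 0 k)%:R)
                                  + (-1) ^+ k * f (x - 1 - k%:R)) = 0.
  apply: big1 => k _.
  by rewrite /bump add1n exprS mulN1r mulNr -addrA -opprD [1 + _]addrC natr1 addNr.
by rewrite [_ + f x]addrC addrACA -big_split cancel_terms addr0 mulr2n.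
Qed.

Lemma sum_alt_sum {R : pzRingType} {G : finRingType} (n : nat) (f : G -> R) :
  \sum_(x : G) alt_sum n f x = (odd n)%:R * \sum_(x : G) f x.
Proof.
rewrite /alt_sum exchange_big /= -sumr_sign_ord mulr_suml.
by apply: eq_bigr => k _; rewrite -mulr_sumr (sumr_subr (fun y => f y)).
Qed.

Lemma alt_sum_ge {R : realDomainType} {G : pzRingType} {n : nat} {f : G -> R}
    {c e : R} (x : G) :
  odd n -> (forall y, `|f y - c| <= e) -> c - e *+ n <= alt_sum n f x.
Proof.
move=> n_odd f_near_c.
have -> : alt_sum n f x =
    c + \sum_(k < n) (-1) ^+ k * (f (x - k%:R) - c).
  have sign_sum_c : \sum_(k < n) (-1) ^+ k * c = c.
    by rewrite -mulr_suml sumr_sign_ord n_odd mul1r.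
  rewrite -{1}sign_sum_c -big_split /=.
  by apply: eq_bigr => k _; rewrite -mulrDr addrCA subrr addr0.
rewrite lerD2l; apply: lerNnormlW; apply: le_trans (ler_norm_sum _ _ _) _.
rewrite -[n in e *+ n]card_ord -sumr_const; apply: ler_sum => k _.
by rewrite normrM normrX normrN1 expr1n mul1r.
Qed.

Lemma convE (R : realFieldType) (G : finZmodType) (D1 D2 : {ffun G -> R}) (x : G) :
  conv D1 D2 x = \sum_(y : G) D1 y * D2 (x - y).
Proof.
rewrite ffunE; apply: eq_bigr => y _; rewrite (big_pred1 (x - y)) // => z /=.
by rewrite [RHS]eq_sym subr_eq eq_sym addrC.
Qed.

Lemma conv_Uhalf (R : realFieldType) (p : nat) (E : {ffun 'F_p -> R}) (x : 'F_p) :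
  conv (Uhalf R p) E x = 2^-1 * (E x + E (x - 1)).
Proof.
rewrite convE (bigD1 0) //= (bigD1 1) /= ?oner_neq0 // big1 => [|y /andP[y_neq1 y_neq0]].
  by rewrite !ffunE eqxx orbT subr0 addr0 mulrDr.
by rewrite ffunE (negPf y_neq0) (negPf y_neq1) mul0r.
Qed.

Theorem lemma3p2 (R : realFieldType) (p : nat) (hp : prime p) (hp3 : (3 <= p)%N)
  (D : {ffun 'F_p -> R}) (hD : is_distr D)
  (hclose : forall x : 'F_p, `|D x - (p%:R)^-1| <= (p%:R ^+ 2)^-1) :
  exists E : {ffun 'F_p -> R}, is_distr E /\ D = conv (Uhalf R p) E.
Proof.
have p_odd : odd p by case: (even_prime hp) => // p_eq2; rewrite p_eq2 in hp3.
have p_eq0 : p%:R = 0 :> 'F_p by apply/pcharf0/pchar_Fp.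
have p_neq0 : p%:R != 0 :> R by rewrite pnatr_eq0 -lt0n prime_gt0.
case: hD => _ D_sum1.
exists [ffun x => alt_sum p D x]; split; first split.
- move=> x; rewrite ffunE; apply: le_trans (alt_sum_ge x p_odd hclose).
  by rewrite -[X in _ - X]mulr_natl expr2 invfM mulVKf // subrr.
- under eq_bigr do rewrite ffunE.
  by rewrite sum_alt_sum p_odd D_sum1 mulr1.
- apply/ffunP => x; rewrite conv_Uhalf !ffunE alt_sumD_subr1 //.
  by rewrite -[X in _ * X]mulr_natl mulKf ?pnatr_eq0.
Qed.
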